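(* Let $p/q$ be an even rational parameter and let $\rho(x,y)=(x,-y)$. Then the set of light points is invariant under $\rho$. More precisely: a point $z$ is a light point of type $\mathcal P$ (resp. $\mathcal Q$) on a horizontal unit segment if and only if $\rho(z)$ is a light point of type $\mathcal P$ (resp. $\mathcal Q$) on a horizontal unit segment; and $z$ is a light point of type $\mathcal P$ on a vertical unit segment if and only if $\rho(z)$ is a light point of type $\mathcal Q$ on a vertical unit segment.
   Context: An even rational parameter is a rational $p/q\in(0,1)$, $p,q$ positive coprime integers, with $pq$ even. Put $\omega=p+q$, $P=2p/\omega$, $Q=2q/\omega$. Families of lines: $\mathcal H$ = lines $y=n$, $\mathcal V$ = lines $x=n$ ($n\in\mathbb Z$), $\mathcal P$ = lines of slope $-P$ with integer $y$-intercept, $\mathcal Q$ = lines of slope $-Q$ with integer $y$-intercept. Functions mod $2\mathbb Z$, with values represented in $(-1,1]$: $F_H(x,y)=2Py$, $F_V(x,y)=2Px$, $F_P(x,y)=Py+P^2x+1$, $F_Q(x,y)=Py+PQx+1$. A unit segment is an edge of a unit square of the integer grid; horizontal ones lie on lines of $\mathcal H$ (set $A=H$), vertical ones on lines of $\mathcal V$ (set $A=V$). For $B\in\{P,Q\}$, a point $z$ of a unit segment is a light point of type $\mathcal B$ on that segment if $z$ lies on a line of the family $\mathcal B$ and $F_A(z)F_B(z)>0$ and $|F_B(z)|<|F_A(z)|$. *)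

From HB Require Import structures.
From mathcomp Require Import all_boot all_order all_algebra.
From mathcomp Require Import reals.
Set Implicit Arguments. Unset Strict Implicit. Unset Printing Implicit Defensive.
Import Order.TTheory GRing.Theory Num.Theory.
Local Open Scope ring_scope.

Section Defs.
Variable R : realType.

Definition even_rational_param (p q : nat) : Prop :=
  [/\ (0 < p)%N, (p < q)%N, coprime p q & ~~ odd (p * q)].

Definition omega (p q : nat) : R := (p + q)%:R.
Definition bigP (p q : nat) : R := (2 * p)%:R / omega p q.
Definition bigQ (p q : nat) : R := (2 * q)%:R / omega p q.

(* representative of t mod 2Z in (-1,1] *)
Definition red2 (t : R) : R := t - 2 * (Num.ceil ((t - 1) / 2))%:~R.

Definition F_H p q (z : R * R) : R := red2 (2 * bigP p q * z.2).
Definition F_V p q (z : R * R) : R := red2 (2 * bigP p q * z.1).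
Definition F_P p q (z : R * R) : R :=
  red2 (bigP p q * z.2 + bigP p q ^+ 2 * z.1 + 1).
Definition F_Q p q (z : R * R) : R :=
  red2 (bigP p q * z.2 + bigP p q * bigQ p q * z.1 + 1).

(* z lies on a horizontal (resp. vertical) unit segment, i.e. on a line of H (resp. V) *)
Definition on_horiz (z : R * R) : Prop := exists n : int, z.2 = n%:~R.
Definition on_vert (z : R * R) : Prop := exists n : int, z.1 = n%:~R.
Definition on_slope_line (s : R) (z : R * R) : Prop :=
  exists n : int, z.2 = - s * z.1 + n%:~R.

Definition light_cond (FA FB : R) : Prop := 0 < FA * FB /\ `|FB| < `|FA|.

Definition light_H_P p q (z : R * R) : Prop :=
  [/\ on_horiz z, on_slope_line (bigP p q) z & light_cond (F_H p q z) (F_P p q z)].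
Definition light_H_Q p q (z : R * R) : Prop :=
  [/\ on_horiz z, on_slope_line (bigQ p q) z & light_cond (F_H p q z) (F_Q p q z)].
Definition light_V_P p q (z : R * R) : Prop :=
  [/\ on_vert z, on_slope_line (bigP p q) z & light_cond (F_V p q z) (F_P p q z)].
Definition light_V_Q p q (z : R * R) : Prop :=
  [/\ on_vert z, on_slope_line (bigQ p q) z & light_cond (F_V p q z) (F_Q p q z)].

Definition rho (z : R * R) : R * R := (z.1, - z.2).
End Defs.

(* On a horizontal line y = n the reflection rho negates F_H and shifts the
   argument of F_B by -2Py, so modulo 2 the pair (F_H, F_B) becomes
   (-F_H, F_B - F_H); on a vertical line F_V is unchanged and, because
   P + Q = 2, the arguments of F_P at z and of F_Q at rho z add up to
   2Px + 2, so (F_V, F_P) becomes (F_V, F_V - F_P).  Both substitutions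
   preserve the light condition "same sign and |F_B| < |F_A|", as long as no
   reduction mod 2 wraps around; the only possible wrap, F_H = 1, would make
   4pn/(p + q) an odd integer, impossible since p + q is odd. *)
From mathcomp Require Import all_boot all_order all_algebra reals.
From mathcomp Require Import ring lra zify.
Import Order.TTheory GRing.Theory Num.Theory.
Local Open Scope ring_scope.
Set Implicit Arguments. Unset Strict Implicit.

Section Red2.
Variable R : realType.
Implicit Types s t : R.

Lemma red2_itv t : -1 < red2 t /\ red2 t <= 1.
Proof.
rewrite /red2; have /andP[] := ceil_itv ((t - 1) / 2).
rewrite intrB; set c := (Num.ceil _)%:~R => h1 h2; lra.
Qed.

Lemma red2_mod2 t : exists k : int, red2 t = t + 2 * k%:~R.
Proof. by exists (- Num.ceil ((t - 1) / 2)); rewrite /red2 intrN mulrN. Qed.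

Lemma red2_eq t s (k : int) :
  -1 < s -> s <= 1 -> s = t + 2 * k%:~R -> red2 t = s.
Proof.
move=> s_gt s_le es; rewrite /red2.
have -> : Num.ceil ((t - 1) / 2) = - k.
  by apply: ceil_def; rewrite intrB intrN; apply/andP; split; lra.
rewrite intrN; lra.
Qed.

Lemma red2D2 t : red2 (t + 2) = red2 t.
Proof.
have [lo hi] := red2_itv (t + 2); have [k ek] := red2_mod2 (t + 2).
by apply/esym/(@red2_eq _ _ (k + 1)) => //; rewrite intrD ek; lra.
Qed.

Lemma red2B s t : -1 < red2 s - red2 t -> red2 s - red2 t <= 1 ->
  red2 (s - t) = red2 s - red2 t.
Proof.
have [k ek] := red2_mod2 s; have [l el] := red2_mod2 t.
by move=> lo hi; apply: (@red2_eq _ _ (k - l)) => //; rewrite ek el intrB; lra.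
Qed.

Lemma red2N t : red2 t != 1 -> red2 (- t) = - red2 t.
Proof.
move=> ne1; have [lo hi] := red2_itv t.
have lt1 : red2 t < 1 by rewrite lt_neqAle ne1.
have red20 : red2 0 = 0 :> R by apply: (@red2_eq _ _ 0); lra.
by rewrite -sub0r red2B red20 ?sub0r; lra.
Qed.

Lemma red2_eq1 t : red2 t = 1 -> exists k : int, t = (2 * k + 1)%:~R.
Proof.
have [k ->] := red2_mod2 t => ek; exists (- k).
by rewrite intrD intrM intrN; lra.
Qed.

End Red2.

Section LightCond.
Variable R : realType.
Implicit Types u v : R.

Lemma light_condN u v : light_cond u v -> light_cond (- u) (- v).
Proof. by rewrite /light_cond mulrNN !normrN. Qed.

Lemma light_cond_sub u v : light_cond u v -> light_cond u (u - v).
Proof.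
wlog u_gt0 : u v / 0 < u => [hwlog uv|].
  have [u_gt0|u_lt0|u0] := ltgtP 0 u; first exact: hwlog.
  - have := light_condN (hwlog (- u) (- v) _ (light_condN uv)).
    by rewrite opprK opprB opprK addrC; apply; rewrite oppr_gt0.
  - by case: uv; rewrite -u0 mul0r ltxx.
rewrite /light_cond => -[]; rewrite pmulr_rgt0 // => v_gt0.
rewrite (gtr0_norm u_gt0) (gtr0_norm v_gt0) => v_lt_u.
by rewrite gtr0_norm ?subr_gt0 //; split; nra.
Qed.

End LightCond.

Section LightRed2.
Variable R : realType.
Implicit Types U V : R.

Lemma light_red2B U V : light_cond (red2 U) (red2 V) ->
  red2 (U - V) = red2 U - red2 V.
Proof.
move=> /light_cond_sub[_ lt_u]; have [lo hi] := red2_itv U.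
have : `|red2 U - red2 V| < 1.
  by apply: lt_le_trans lt_u _; rewrite ler_norml; apply/andP; split; lra.
by rewrite ltr_norml => /andP[b1 b2]; rewrite red2B //; lra.
Qed.

Lemma light_red2_sub U V : light_cond (red2 U) (red2 V) ->
  light_cond (red2 U) (red2 (U - V)).
Proof. by move=> uv; rewrite light_red2B //; apply: light_cond_sub. Qed.

Lemma light_red2_opp U V : red2 U != 1 -> light_cond (red2 U) (red2 V) ->
  light_cond (red2 (- U)) (red2 (V - U)).
Proof.
move=> U1 uv; have := light_red2_sub uv; rewrite light_red2B // => uvU.
have UV1 : red2 (U - V) != 1.
  rewrite light_red2B //; apply/eqP => e; case: uvU; rewrite e normr1 => _.
  by have [lo hi] := red2_itv U; rewrite ltNge ler_norml hi andbT; lra.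
by rewrite red2N // -opprB red2N // light_red2B //; apply: light_condN.
Qed.

End LightRed2.

Lemma even_param_odd_omega p q : even_rational_param p q -> odd (p + q).
Proof.
case=> _ _ cpq; rewrite oddD oddM; case: (odd p) (odd q) (dvdn2 p) (dvdn2 q) =>
  [] [] //= p2 q2 _.
by move: cpq; rewrite /coprime => /eqP gcd1; move: (dvdn_gcd 2 p q);
  rewrite p2 q2 gcd1.
Qed.

Section Reflection.
Variable R : realType.
Implicit Types (s : R) (z : R * R).

Lemma rhoK z : rho (rho z) = z.
Proof. by case: z => x y; rewrite /rho opprK. Qed.

Lemma on_horiz_rho z : on_horiz z -> on_horiz (rho z).
Proof. by case=> n ez; exists (- n); rewrite /= ez intrN. Qed.

Lemma on_slope_line_horiz_rho s z :
  on_horiz z -> on_slope_line s z -> on_slope_line s (rho z).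
Proof.
case=> n ez [m em]; exists (m - 2 * n).
by rewrite /= intrB intrM; rewrite ez in em *; lra.
Qed.

Lemma on_slope_line_vert_rho s (s' : R) z : s + s' = 2 ->
  on_vert z -> on_slope_line s z -> on_slope_line s' (rho z).
Proof.
move=> ss' [n ez] [m em]; exists (2 * n - m).
have -> : s' = 2 - s by lra.
by rewrite /= intrB intrM; rewrite ez in em *; lra.
Qed.

End Reflection.

Section EvenParam.
Variables (R : realType) (p q : nat).
Hypothesis pq : even_rational_param p q.
Local Notation P := (bigP R p q).
Local Notation Q := (bigQ R p q).
Implicit Types z : R * R.

Lemma omega_neq0 : omega R p q != 0.
Proof.
by case: pq => p_gt0 _ _ _; rewrite pnatr_eq0 addn_eq0 negb_and -lt0n p_gt0.
Qed.

Lemma bigP_add_bigQ : P + Q = 2.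
Proof.
rewrite /bigP /bigQ -mulrDl -natrD -mulnDr natrM -mulrA divff ?mulr1 //.
exact: omega_neq0.
Qed.

Lemma F_H_neq1 (n : int) : red2 (2 * P * n%:~R) != 1.
Proof.
apply/eqP => /red2_eq1[k ek].
have pq_odd := even_param_odd_omega pq.
have {}ek : ((p + q)%:Z * (2 * k + 1))%:~R = (4 * p%:Z * n)%:~R :> R.
  rewrite !intrM -ek /bigP natrM /=.
  by field; move: omega_neq0; rewrite /omega natrD.
move/eqP: ek; rewrite eqr_int -(odd_double_half (p + q)) pq_odd => /eqP.
lia.
Qed.

Lemma light_horiz_rho c z : on_horiz z ->
  light_cond (F_H p q z) (red2 (P * z.2 + c * z.1 + 1)) ->
  light_cond (F_H p q (rho z)) (red2 (P * (rho z).2 + c * (rho z).1 + 1)).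
Proof.
case: z => x y [n /= ->]; rewrite /F_H /= mulrN.
have -> : P * - n%:~R + c * x + 1 = P * n%:~R + c * x + 1 - 2 * P * n%:~R.
  by ring.
exact/light_red2_opp/F_H_neq1.
Qed.

Lemma light_vert_rho c c' z : c + c' = 2 * P ->
  light_cond (F_V p q z) (red2 (P * z.2 + c * z.1 + 1)) ->
  light_cond (F_V p q (rho z)) (red2 (P * (rho z).2 + c' * (rho z).1 + 1)).
Proof.
case: z => x y cc'; rewrite /F_V /= -(red2D2 (_ * x)).
have -> : P * - y + c' * x + 1 = 2 * P * x + 2 - (P * y + c * x + 1).
  by rewrite (_ : c' = 2 * P - c); [ring | lra].
exact: light_red2_sub.
Qed.

Lemma bigP_sqr_add_mul : P ^+ 2 + P * Q = 2 * P.
Proof. by rewrite expr2 -mulrDr bigP_add_bigQ mulrC. Qed.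

Lemma bigQ_add_bigP : Q + P = 2.
Proof. by rewrite addrC bigP_add_bigQ. Qed.

Lemma light_H_P_rho z : light_H_P p q z -> light_H_P p q (rho z).
Proof.
case=> hz sz lz; split; [exact: on_horiz_rho | exact: on_slope_line_horiz_rho |].
exact: light_horiz_rho.
Qed.

Lemma light_H_Q_rho z : light_H_Q p q z -> light_H_Q p q (rho z).
Proof.
case=> hz sz lz; split; [exact: on_horiz_rho | exact: on_slope_line_horiz_rho |].
exact: light_horiz_rho.
Qed.

Lemma light_V_P_rho z : light_V_P p q z -> light_V_Q p q (rho z).
Proof.
case=> vz sz lz; split; [exact: vz |
  exact: (on_slope_line_vert_rho bigP_add_bigQ) |].
exact: (light_vert_rho bigP_sqr_add_mul).
Qed.

Lemma light_V_Q_rho z : light_V_Q p q z -> light_V_P p q (rho z).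
Proof.
case=> vz sz lz; split; [exact: vz |
  exact: (on_slope_line_vert_rho bigQ_add_bigP) |].
by apply: (light_vert_rho _ lz); rewrite addrC bigP_sqr_add_mul.
Qed.

End EvenParam.

Theorem lemma2p3 (R : realType) (p q : nat) :
  even_rational_param p q ->
  forall z : R * R,
    (light_H_P p q z <-> light_H_P p q (rho z)) /\
    (light_H_Q p q z <-> light_H_Q p q (rho z)) /\
    (light_V_P p q z <-> light_V_Q p q (rho z)).
Proof.
move=> pq z; split; [|split]; split.
- exact: light_H_P_rho.
- by move/(light_H_P_rho pq); rewrite rhoK.
- exact: light_H_Q_rho.
- by move/(light_H_Q_rho pq); rewrite rhoK.
- exact: light_V_P_rho.
- by move/(light_V_Q_rho pq); rewrite rhoK.
Qed.
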